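(* Let $(Q,\cdot)$ be a quasigroup satisfying $(xx)(yz)=(x(xy))z$ for all $x,y,z\in Q$ (an LC1-quasigroup). Then $Q$ satisfies $x(y(yz))=(x(yy))z$ for all $x,y,z\in Q$ (i.e. $Q$ is an LC4-quasigroup).
   Context: A quasigroup is a set $Q$ with a binary operation $\cdot$ (written as juxtaposition) such that for all $a,b\in Q$ each of the equations $ax=b$ and $ya=b$ has a unique solution in $Q$. *)

Definition is_quasigroup (Q : Type) (mul : Q -> Q -> Q) : Prop :=
  forall a b : Q,
    (exists! x : Q, mul a x = b) /\ (exists! y : Q, mul y a = b).

Definition LC1 (Q : Type) (mul : Q -> Q -> Q) : Prop :=
  forall x y z : Q, mul (mul x x) (mul y z) = mul (mul x (mul x y)) z.

Definition LC4 (Q : Type) (mul : Q -> Q -> Q) : Prop :=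
  forall x y z : Q, mul x (mul y (mul y z)) = mul (mul x (mul y y)) z.

(** An LC1-quasigroup is a loop: if [a e = a] then cancelling [a a] in
    [(a a)(e z) = (a (a e)) z = (a a) z] shows that [e] is a left unit, and
    then also a right unit.  Taking [z = e] in LC1 gives [(x x) y = x (x y)],
    and LC1 then says that squares lie in the left nucleus.  This yields the
    left inverse property, and with it the inverse of [y y] is the square
    [y' y'] of the inverse of [y].  Cancelling [(y' y') x'] on the left of
    [x ((y y) z)] and of [(x (y y)) z] shows that squares also lie in the
    middle nucleus, which, combined with [(y y) z = y (y z)], is LC4. *)


Section Quasigroup.

Context {Q : Type} {mul : Q -> Q -> Q}.
Hypothesis hQ : is_quasigroup Q mul.

Local Notation "x * y" := (mul x y).

Lemma quasigroup_cancel_l (a x y : Q) : a * x = a * y -> x = y.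
Proof.
  intros Hxy.
  destruct (proj1 (hQ a (a * x))) as [w [_ Hw]].
  rewrite <- (Hw x eq_refl).
  apply Hw. symmetry. exact Hxy.
Qed.

Lemma quasigroup_cancel_r (a x y : Q) : x * a = y * a -> x = y.
Proof.
  intros Hxy.
  destruct (proj2 (hQ a (x * a))) as [w [_ Hw]].
  rewrite <- (Hw x eq_refl).
  apply Hw. symmetry. exact Hxy.
Qed.

Lemma quasigroup_solve_l (a b : Q) : exists x, a * x = b.
Proof.
  destruct (proj1 (hQ a b)) as [x [Hx _]].
  exists x. exact Hx.
Qed.

Section LC1.

Hypothesis h1 : LC1 Q mul.

Lemma LC1_right_unit_left_unit {a e : Q} :
  a * e = a -> forall z, e * z = z.
Proof.
  intros Hae z.
  apply (quasigroup_cancel_l (a * a)).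
  rewrite h1, Hae. reflexivity.
Qed.

Section Unit.

Context {e : Q}.
Hypothesis mul1x : forall z, e * z = z.

Lemma LC1_mulx1 (w : Q) : w * e = w.
Proof.
  destruct (quasigroup_solve_l w w) as [f Hwf].
  assert (Hfe : f = e).
  { apply (quasigroup_cancel_r e).
    rewrite (LC1_right_unit_left_unit Hwf), mul1x. reflexivity. }
  rewrite <- Hfe. exact Hwf.
Qed.

Lemma LC1_sqr_mulA (x y : Q) : (x * x) * y = x * (x * y).
Proof.
  pose proof (h1 x y e) as H.
  rewrite !LC1_mulx1 in H. exact H.
Qed.

Lemma LC1_sqr_left_nucleus (x y z : Q) : (x * x) * (y * z) = ((x * x) * y) * z.
Proof. rewrite h1, LC1_sqr_mulA. reflexivity. Qed.

Lemma LC1_left_inverse {a a' : Q} (w : Q) : a * a' = e -> a' * (a * w) = w.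
Proof.
  intros Ha.
  apply (quasigroup_cancel_l (a * a)).
  rewrite LC1_sqr_left_nucleus, LC1_sqr_mulA, Ha, LC1_mulx1, LC1_sqr_mulA.
  reflexivity.
Qed.

Lemma LC1_inverse_sym {a a' : Q} : a * a' = e -> a' * a = e.
Proof.
  intros Ha.
  pose proof (LC1_left_inverse e Ha) as H.
  rewrite LC1_mulx1 in H. exact H.
Qed.

Lemma LC1_sqr_inverse {a a' : Q} : a * a' = e -> (a' * a') * (a * a) = e.
Proof.
  intros Ha.
  rewrite LC1_sqr_mulA, (LC1_left_inverse a Ha).
  exact (LC1_inverse_sym Ha).
Qed.

Lemma LC1_sqr_middle_nucleus (x y z : Q) : x * ((y * y) * z) = (x * (y * y)) * z.
Proof.
  destruct (quasigroup_solve_l x e) as [x' Hx].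
  destruct (quasigroup_solve_l y e) as [y' Hy].
  set (s := y * y).
  assert (Hus : (y' * y') * s = e) by exact (LC1_sqr_inverse Hy).
  assert (Hp : ((y' * y') * x') * (x * s) = e).
  { rewrite <- LC1_sqr_left_nucleus, (LC1_left_inverse s Hx). exact Hus. }
  apply (quasigroup_cancel_l ((y' * y') * x')).
  rewrite (LC1_left_inverse z (LC1_inverse_sym Hp)).
  rewrite <- LC1_sqr_left_nucleus, (LC1_left_inverse (s * z) Hx).
  rewrite LC1_sqr_left_nucleus, Hus. apply mul1x.
Qed.

End Unit.

End LC1.

End Quasigroup.

Theorem mainTheorem9 (Q : Type) (mul : Q -> Q -> Q)
  (hQ : is_quasigroup Q mul) (h1 : LC1 Q mul) : LC4 Q mul.
Proof.
  intros x y z.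
  destruct (quasigroup_solve_l hQ x x) as [e He].
  pose proof (LC1_right_unit_left_unit hQ h1 He) as mul1x.
  rewrite <- (LC1_sqr_mulA hQ h1 mul1x).
  apply (LC1_sqr_middle_nucleus hQ h1 mul1x).
Qed.
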